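(* Let $\Omega\subset\mathbb{R}^n$ be a bounded open convex set with smooth boundary, let $\Lambda>0$, and let $u$ be a nonconstant continuous viscosity solution of $(N_\Lambda)$. Then $u$ changes sign in $\Omega$, i.e. both sets $\{x\in\Omega:u(x)>0\}$ and $\{x\in\Omega:u(x)<0\}$ are nonempty.
   Context: $\nu$ denotes the outer unit normal to $\partial\Omega$, and $\Delta_\infty u=\sum_{i,j=1}^n u_{x_i}u_{x_ix_j}u_{x_j}$. For $\Lambda\ge 0$, problem $(N_\Lambda)$ is $$\min\{|\nabla u|-\Lambda|u|,-\Delta_\infty u\}=0 \text{ in }\{u>0\}\cap\Omega,\quad \max\{\Lambda|u|-|\nabla u|,-\Delta_\infty u\}=0 \text{ in }\{u<0\}\cap\Omega,\quad -\Delta_\infty u=0 \text{ in }\{u=0\}\cap\Omega,\quad \tfrac{\partial u}{\partial\nu}=0 \text{ on }\partial\Omega,$$ understood in the viscosity sense as follows. For $s\in\mathbb{R}$, $\xi\in\mathbb{R}^n$, $X$ a symmetric $n\times n$ matrix, let $F(s,\xi,X)=\min\{|\xi|-\Lambda|s|,-\langle X\xi,\xi\rangle\}$, $G(s,\xi,X)=\max\{\Lambda|s|-|\xi|,-\langle X\xi,\xi\rangle\}$, $H(X)=-\langle X\xi,\xi\rangle$ (evaluated at the same $\xi$). For a function $u$ and point $x_0$, let $E$ denote $F$ if $u(x_0)>0$, $G$ if $u(x_0)<0$, $H$ if $u(x_0)=0$. An upper semicontinuous $u$ on $\overline\Omega$ is a viscosity subsolution if: for every $x_0\in\Omega$ and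 $\phi\in C^2(\Omega)$ with $\phi(x_0)=u(x_0)$ and $u(x)<\phi(x)$ for $x\neq x_0$, one has $E(\phi(x_0),\nabla\phi(x_0),\nabla^2\phi(x_0))\le 0$; and for every $x_0\in\partial\Omega$ and $\phi\in C^2(\overline\Omega)$ with the same touching property, $\min\{E(\phi(x_0),\nabla\phi(x_0),\nabla^2\phi(x_0)),\frac{\partial\phi}{\partial\nu}(x_0)\}\le 0$. A lower semicontinuous $u$ is a viscosity supersolution if the same holds with $u(x)>\phi(x)$ for $x\ne x_0$, with ''$E\le 0$'' replaced by ''$E\ge 0$'' at interior points and with $\max\{E(\phi(x_0),\nabla\phi(x_0),\nabla^2\phi(x_0)),\frac{\partial\phi}{\partial\nu}(x_0)\}\ge 0$ at boundary points. A continuous $u$ is a viscosity solution if it is both a sub- and a supersolution. *)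

From mathcomp Require Import all_boot.
From Stdlib Require Import Reals.
Set Implicit Arguments. Unset Strict Implicit.
Local Open Scope R_scope.

Definition vec (n : nat) := 'I_n -> R.

Definition vadd n (x y : vec n) : vec n := fun i => x i + y i.
Definition vsub n (x y : vec n) : vec n := fun i => x i - y i.
Definition vscale n (a : R) (x : vec n) : vec n := fun i => a * x i.
Definition dot n (x y : vec n) : R := \big[Rplus/0]_(i < n) (x i * y i).
Definition vnorm n (x : vec n) : R := sqrt (dot x x).
Definition dist n (x y : vec n) : R := vnorm (vsub x y).

Definition quad n (X : 'I_n -> 'I_n -> R) (xi : vec n) : R :=
  \big[Rplus/0]_(i < n) \big[Rplus/0]_(j < n) (X i j * xi i * xi j).

Definition Rn_open n (O : vec n -> Prop) : Prop :=
  forall x, O x -> exists r, 0 < r /\ forall y, dist y x < r -> O y.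
Definition Rn_bounded n (O : vec n -> Prop) : Prop :=
  exists M, forall x, O x -> vnorm x <= M.
Definition Rn_convex n (O : vec n -> Prop) : Prop :=
  forall x y t, O x -> O y -> 0 <= t <= 1 ->
    O (vadd (vscale t x) (vscale (1 - t) y)).
Definition Rn_closure n (O : vec n -> Prop) (x : vec n) : Prop :=
  forall eps, 0 < eps -> exists y, O y /\ dist y x < eps.
Definition Rn_boundary n (O : vec n -> Prop) (x : vec n) : Prop :=
  Rn_closure O x /\ ~ O x.

Definition continuous_at n (f : vec n -> R) (x : vec n) : Prop :=
  forall eps, 0 < eps -> exists d, 0 < d /\
    forall y, dist y x < d -> Rabs (f y - f x) < eps.
Definition continuous_on n (A : vec n -> Prop) (f : vec n -> R) : Prop :=
  forall x, A x -> forall eps, 0 < eps -> exists d, 0 < d /\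
    forall y, A y -> dist y x < d -> Rabs (f y - f x) < eps.
Definition usc_on n (A : vec n -> Prop) (f : vec n -> R) : Prop :=
  forall x, A x -> forall eps, 0 < eps -> exists d, 0 < d /\
    forall y, A y -> dist y x < d -> f y < f x + eps.
Definition lsc_on n (A : vec n -> Prop) (f : vec n -> R) : Prop :=
  forall x, A x -> forall eps, 0 < eps -> exists d, 0 < d /\
    forall y, A y -> dist y x < d -> f x - eps < f y.

Definition shift n (x : vec n) (i : 'I_n) (t : R) : vec n :=
  fun j => if j == i then x j + t else x j.
Definition partial n (f : vec n -> R) (i : 'I_n) (x : vec n) (l : R) : Prop :=
  derivable_pt_lim (fun t => f (shift x i t)) 0 l.

Definition C2_on n (U : vec n -> Prop) (f : vec n -> R)
    (g : vec n -> vec n) (H : vec n -> 'I_n -> 'I_n -> R) : Prop :=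
  forall x, U x ->
    continuous_at f x /\
    (forall i, partial f i x (g x i) /\ continuous_at (fun y => g y i) x) /\
    (forall i j, partial (fun y => g y i) j x (H x i j) /\
                 continuous_at (fun y => H y i j) x).

Fixpoint Ck n (k : nat) (f : vec n -> R) : Prop :=
  match k with
  | O => forall x, continuous_at f x
  | S k' => (forall x, continuous_at f x) /\
      exists D : 'I_n -> vec n -> R,
        (forall i x, partial f i x (D i x)) /\ (forall i, Ck k' (D i))
  end.
Definition smooth n (f : vec n -> R) : Prop := forall k, Ck k f.

Definition defining_function n (O : vec n -> Prop) (rho : vec n -> R)
    (Drho : vec n -> vec n) : Prop :=
  smooth rho /\
  (forall x i, partial rho i x (Drho x i)) /\
  (forall x, O x <-> rho x < 0) /\
  (forall x, rho x = 0 -> Drho x <> (fun _ => 0)).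

Definition smooth_boundary n (O : vec n -> Prop) : Prop :=
  exists rho Drho, defining_function O rho Drho.

Definition outer_normal n (O : vec n -> Prop) (x0 nu : vec n) : Prop :=
  Rn_boundary O x0 /\
  exists rho Drho, defining_function O rho Drho /\
    nu = vscale (/ vnorm (Drho x0)) (Drho x0).

Definition Fop n (Lam s : R) (xi : vec n) (X : 'I_n -> 'I_n -> R) : R :=
  Rmin (vnorm xi - Lam * Rabs s) (- quad X xi).
Definition Gop n (Lam s : R) (xi : vec n) (X : 'I_n -> 'I_n -> R) : R :=
  Rmax (Lam * Rabs s - vnorm xi) (- quad X xi).
Definition Hop n (xi : vec n) (X : 'I_n -> 'I_n -> R) : R := - quad X xi.

(* the selection uses the sign of u(x0) *)
Definition Eop n (Lam ux0 s : R) (xi : vec n) (X : 'I_n -> 'I_n -> R) : R :=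
  if Rlt_dec 0 ux0 then Fop Lam s xi X
  else if Rlt_dec ux0 0 then Gop Lam s xi X
  else Hop xi X.

Definition visc_sub n (O : vec n -> Prop) (Lam : R) (u : vec n -> R) : Prop :=
  usc_on (Rn_closure O) u /\
  (forall x0 phi g H, O x0 -> C2_on O phi g H -> phi x0 = u x0 ->
     (forall x, O x -> x <> x0 -> u x < phi x) ->
     Eop Lam (u x0) (phi x0) (g x0) (H x0) <= 0) /\
  (forall x0 nu phi g H U, outer_normal O x0 nu ->
     Rn_open U -> (forall x, Rn_closure O x -> U x) -> C2_on U phi g H ->
     phi x0 = u x0 ->
     (forall x, Rn_closure O x -> x <> x0 -> u x < phi x) ->
     Rmin (Eop Lam (u x0) (phi x0) (g x0) (H x0)) (dot (g x0) nu) <= 0).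

Definition visc_super n (O : vec n -> Prop) (Lam : R) (u : vec n -> R) : Prop :=
  lsc_on (Rn_closure O) u /\
  (forall x0 phi g H, O x0 -> C2_on O phi g H -> phi x0 = u x0 ->
     (forall x, O x -> x <> x0 -> u x > phi x) ->
     Eop Lam (u x0) (phi x0) (g x0) (H x0) >= 0) /\
  (forall x0 nu phi g H U, outer_normal O x0 nu ->
     Rn_open U -> (forall x, Rn_closure O x -> U x) -> C2_on U phi g H ->
     phi x0 = u x0 ->
     (forall x, Rn_closure O x -> x <> x0 -> u x > phi x) ->
     Rmax (Eop Lam (u x0) (phi x0) (g x0) (H x0)) (dot (g x0) nu) >= 0).

Definition visc_solution n (O : vec n -> Prop) (Lam : R) (u : vec n -> R) : Prop :=
  continuous_on (Rn_closure O) u /\ visc_sub O Lam u /\ visc_super O Lam u.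

(* Suppose u <= 0 in Omega and u p < u q.  Take d = (u q - u p) / 2 and r so small that
   B(p, r) lies in Omega and u oscillates by less than d on it, and maximise
   u + d exp (-|x - p|^2 / r^2) over the closure of Omega.  The maximiser y lies outside B(p, r),
   where the Gaussian is strictly convex in the radial direction; hence the smooth function
   phi = const - d exp (-|x - p|^2 / r^2) + |x - y|^4 touching u from above at y has
   Delta_infty phi (y) < 0.  As u(y) <= 0, the operator E at y is G or H, both at least
   -Delta_infty phi (y) > 0, which contradicts the subsolution inequality.  If y lies on the
   boundary, convexity of Omega puts B(p, r) on the inner side of the tangent plane at y, so the
   normal derivative of phi is positive as well and the Neumann alternative fails too.
   Hence a nonpositive subsolution is constant.  Applying this to u and to -u, which is a
   subsolution because u is a supersolution, shows that a nonconstant solution changes sign. *)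

From Pilot Require Import Defs.
From mathcomp Require Import all_boot.
From Stdlib Require Import Reals.
From HB Require Import structures.
From Stdlib Require Import Lra Lia FunctionalExtensionality Classical ClassicalEpsilon.
Set Implicit Arguments. Unset Strict Implicit.
Local Open Scope R_scope.

(** * Finite sums and Euclidean distance *)

HB.instance Definition _ := Monoid.isComLaw.Build R 0 Rplus
  (fun a b c => esym (Rplus_assoc a b c)) Rplus_comm Rplus_0_l.

Lemma sumR_ge0 n (F : 'I_n -> R) :
  (forall i, 0 <= F i) -> 0 <= \big[Rplus/0]_(i < n) F i.
Proof. by move=> F_ge0; apply: (big_ind (fun x => 0 <= x)) => //; [lra | move=> a b; lra]. Qed.

Lemma sumR_le n (F G : 'I_n -> R) :
  (forall i, F i <= G i) -> \big[Rplus/0]_(i < n) F i <= \big[Rplus/0]_(i < n) G i.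
Proof. by move=> FG; apply: (big_ind2 (fun x y => x <= y)) => //; [lra | move=> a b c d; lra]. Qed.

Lemma sumR_add n (F G : 'I_n -> R) :
  \big[Rplus/0]_(i < n) (F i + G i) =
  \big[Rplus/0]_(i < n) F i + \big[Rplus/0]_(i < n) G i.
Proof. exact: big_split. Qed.

Lemma sumR_mull n c (F : 'I_n -> R) :
  \big[Rplus/0]_(i < n) (c * F i) = c * \big[Rplus/0]_(i < n) F i.
Proof. by apply: (big_ind2 (fun x y => x = c * y)) => [|a b d e -> ->|]; [ring | ring |]. Qed.

Lemma sumR_term_le n (F : 'I_n -> R) i :
  (forall j, 0 <= F j) -> F i <= \big[Rplus/0]_(j < n) F j.
Proof.
move=> F_ge0; rewrite (bigD1 i) //= -[X in X <= _]Rplus_0_r; apply: Rplus_le_compat_l.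
by apply: (big_ind (fun x => 0 <= x)) => [|a b|j _]; [lra | lra | apply: F_ge0].
Qed.

Lemma sumR_eq0 n (F : 'I_n -> R) :
  (forall i, 0 <= F i) -> \big[Rplus/0]_(i < n) F i = 0 -> forall i, F i = 0.
Proof. by move=> F_ge0 sum0 i; have := sumR_term_le i F_ge0; have := F_ge0 i; lra. Qed.

Definition kron n (i j : 'I_n) : R := if i == j then 1 else 0.

Lemma sumR_kronecker n (F : 'I_n -> R) i : \big[Rplus/0]_(j < n) (F j * kron i j) = F i.
Proof.
rewrite /kron (bigD1 i) //= eqxx big1 ?Rmult_1_r ?Rplus_0_r //.
by move=> j /negbTE; rewrite eq_sym => ->; rewrite Rmult_0_r.
Qed.

Lemma sumR_const n c : \big[Rplus/0]_(i < n) c = INR n * c.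
Proof.
rewrite big_const_ord; elim: n => [|m IH] /=; first ring.
by rewrite IH; case: m {IH} => [|m] /=; ring.
Qed.

Lemma sqr_ge0 (a : R) : 0 <= a * a.
Proof. exact: Rle_0_sqr. Qed.

Lemma dot_ge0 n (x : vec n) : 0 <= dot x x.
Proof. by apply: sumR_ge0 => i; apply: sqr_ge0. Qed.

Lemma vnorm_ge0 n (x : vec n) : 0 <= vnorm x.
Proof. exact: sqrt_pos. Qed.

Lemma vnorm_sqr n (x : vec n) : vnorm x * vnorm x = dot x x.
Proof. by rewrite /vnorm sqrt_sqrt //; apply: dot_ge0. Qed.

Lemma vnorm_gt0 n (x : vec n) : x <> (fun _ => 0) -> 0 < vnorm x.
Proof.
move=> x_neq0; apply: sqrt_lt_R0.
case: (dot_ge0 x) => // /esym dot0; case: x_neq0; apply: functional_extensionality => i.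
by have := sumR_eq0 (fun j => sqr_ge0 (x j)) dot0 i => /Rmult_integral; lra.
Qed.

Lemma dist_ge0 n (x y : vec n) : 0 <= Defs.dist x y.
Proof. exact: vnorm_ge0. Qed.

Lemma dist_sqr n (x y : vec n) :
  Defs.dist x y * Defs.dist x y = \big[Rplus/0]_(i < n) ((x i - y i) * (x i - y i)).
Proof. by rewrite /Defs.dist vnorm_sqr. Qed.

Lemma dist_xx n (x : vec n) : Defs.dist x x = 0.
Proof.
rewrite /Defs.dist /vnorm /dot big1 ?sqrt_0 // => i _; rewrite /vsub; ring.
Qed.

Lemma distC n (x y : vec n) : Defs.dist x y = Defs.dist y x.
Proof.
by rewrite /Defs.dist /vnorm /dot; congr sqrt; apply: eq_bigr => i _; rewrite /vsub; ring.
Qed.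

Lemma dist_eq0 n (x y : vec n) : Defs.dist x y = 0 -> x = y.
Proof.
move=> dxy0; have : Defs.dist x y * Defs.dist x y = 0 by rewrite dxy0; ring.
rewrite dist_sqr => /(sumR_eq0 (fun j => sqr_ge0 (x j - y j))) sq0.
by apply: functional_extensionality => i; have /Rmult_integral := sq0 i; lra.
Qed.

Lemma dist_gt0 n (x y : vec n) : x <> y -> 0 < Defs.dist x y.
Proof.
move=> xy; have : Defs.dist x y <> 0 by move/dist_eq0.
by have := dist_ge0 x y; lra.
Qed.

Lemma coord_le_dist n (x y : vec n) i : Rabs (x i - y i) <= Defs.dist x y.
Proof.
rewrite -[X in _ <= X](Rabs_pos_eq _ (dist_ge0 x y)); apply: Rsqr_le_abs_0.
by rewrite /Rsqr dist_sqr; apply: (sumR_term_le i (fun j => sqr_ge0 (x j - y j))).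
Qed.

Lemma vnorm_dist0 n (x : vec n) : vnorm x = Defs.dist x (fun _ => 0).
Proof.
by rewrite /Defs.dist /vnorm /dot; congr sqrt; apply: eq_bigr => j _; rewrite /vsub; ring.
Qed.

Lemma coord_le_vnorm n (x : vec n) i : Rabs (x i) <= vnorm x.
Proof.
by rewrite vnorm_dist0; have := coord_le_dist x (fun _ => 0) i; rewrite Rminus_0_r.
Qed.

(* A weak triangle inequality, enough for every estimate below. *)
Lemma dist_sqr_triangle n (a b c : vec n) :
  Defs.dist a c * Defs.dist a c <=
  2 * (Defs.dist a b * Defs.dist a b + Defs.dist b c * Defs.dist b c).
Proof.
rewrite !dist_sqr -sumR_add -sumR_mull; apply: sumR_le => i.
by have := sqr_ge0 ((a i - b i) - (b i - c i)); nra.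
Qed.

Lemma dist_scale n (c : R) (a b : vec n) : 0 <= c ->
  Defs.dist (fun j => c * a j) (fun j => c * b j) = c * Defs.dist a b.
Proof.
move=> c_ge0; rewrite /Defs.dist /vnorm -[in RHS](sqrt_Rsqr c c_ge0).
rewrite -sqrt_mult_alt; last exact: Rle_0_sqr.
by congr sqrt; rewrite /dot -sumR_mull; apply: eq_bigr => j _; rewrite /vsub /Rsqr; ring.
Qed.

Lemma dot_scale n a b (x y : vec n) : dot (vscale a x) (vscale b y) = a * b * dot x y.
Proof. by rewrite /dot -sumR_mull; apply: eq_bigr => i _; rewrite /vscale; ring. Qed.

(** * Closure and continuity *)

Definition Rn_closed n (C : vec n -> Prop) : Prop := forall x, Rn_closure C x -> C x.

Lemma Rn_closure_sub n (O : vec n -> Prop) x : O x -> Rn_closure O x.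
Proof. by move=> Ox e e_gt0; exists x; rewrite dist_xx. Qed.

Lemma Rn_closure_closed n (O : vec n -> Prop) : Rn_closed (Rn_closure O).
Proof.
move=> x clx e e_gt0.
have [y [cly dyx]] := clx (e / 2) ltac:(lra).
have [z [Oz dzy]] := cly (e / 2) ltac:(lra).
exists z; split => //.
have := dist_sqr_triangle z y x.
have := dist_ge0 z y; have := dist_ge0 y x; have := dist_ge0 z x; nra.
Qed.

Lemma Rn_closure_bounded n (O : vec n -> Prop) : Rn_bounded O -> Rn_bounded (Rn_closure O).
Proof.
move=> [M boundM]; exists (2 * (Rabs M + 1)) => x clx.
have [y [Oy dyx]] := clx 1 Rlt_0_1.
have := dist_sqr_triangle x y (fun _ => 0); rewrite -!vnorm_dist0 distC.
have := boundM y Oy; have := vnorm_ge0 y; have := vnorm_ge0 x; have := dist_ge0 y x.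
have := Rle_abs M; have := Rabs_pos M; nra.
Qed.

Lemma Rn_open_True n : Rn_open (fun _ : vec n => True).
Proof. by move=> x _; exists 1; split=> //; lra. Qed.

Lemma continuous_at_const n (c : R) (x : vec n) : continuous_at (fun _ => c) x.
Proof. by move=> e e_gt0; exists 1; split=> [|y _]; [lra | rewrite Rminus_diag Rabs_R0]. Qed.

Lemma continuous_at_coord n j (x : vec n) : continuous_at (fun y => y j) x.
Proof. by move=> e e_gt0; exists e; split=> // y dyx; have := coord_le_dist y x j; lra. Qed.

Lemma continuous_at_plus n (f g : vec n -> R) x :
  continuous_at f x -> continuous_at g x -> continuous_at (fun y => f y + g y) x.
Proof.
move=> cf cg e e_gt0.
have [d1 [d1_gt0 near_f]] := cf (e / 2) ltac:(lra).
have [d2 [d2_gt0 near_g]] := cg (e / 2) ltac:(lra).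
exists (Rmin d1 d2); split=> [|y dyx]; first exact: Rmin_pos.
have := near_f y (Rlt_le_trans _ _ _ dyx (Rmin_l _ _)).
have := near_g y (Rlt_le_trans _ _ _ dyx (Rmin_r _ _)).
have := Rabs_triang (f y - f x) (g y - g x).
have -> : f y - f x + (g y - g x) = f y + g y - (f x + g x) by ring.
lra.
Qed.

Lemma continuous_at_opp n (f : vec n -> R) x :
  continuous_at f x -> continuous_at (fun y => - f y) x.
Proof.
move=> cf e e_gt0; have [d [d_gt0 near_f]] := cf e e_gt0; exists d; split=> // y dyx.
have -> : - f y - - f x = - (f y - f x) by ring.
by rewrite Rabs_Ropp; apply: near_f.
Qed.

Lemma continuous_at_minus n (f g : vec n -> R) x :
  continuous_at f x -> continuous_at g x -> continuous_at (fun y => f y - g y) x.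
Proof. by move=> cf cg; apply: (continuous_at_plus cf (continuous_at_opp cg)). Qed.

Lemma continuous_at_mult n (f g : vec n -> R) x :
  continuous_at f x -> continuous_at g x -> continuous_at (fun y => f y * g y) x.
Proof.
move=> cf cg e e_gt0.
set a := f x; set b := g x; set M := Rabs a + Rabs b + 1.
have M_gt0 : 0 < M by rewrite /M; have := Rabs_pos a; have := Rabs_pos b; lra.
set e' := Rmin 1 (e / (2 * M)).
have e'_gt0 : 0 < e' by apply: Rmin_pos; [lra | apply: Rdiv_lt_0_compat; lra].
have e'_le1 : e' <= 1 := Rmin_l _ _.
have e'M : e' * M <= e / 2.
  have -> : e / 2 = e / (2 * M) * M by field; lra.
  by apply: Rmult_le_compat_r; [lra | apply: Rmin_r].
have [d1 [d1_gt0 near_f]] := cf e' e'_gt0.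
have [d2 [d2_gt0 near_g]] := cg e' e'_gt0.
exists (Rmin d1 d2); split=> [|y dyx]; first exact: Rmin_pos.
have df := near_f y (Rlt_le_trans _ _ _ dyx (Rmin_l _ _)).
have dg := near_g y (Rlt_le_trans _ _ _ dyx (Rmin_r _ _)).
rewrite -/a in df; rewrite -/b in dg.
have -> : f y * g y - a * b = (f y - a) * (g y - b) + a * (g y - b) + b * (f y - a) by ring.
have := Rabs_triang ((f y - a) * (g y - b) + a * (g y - b)) (b * (f y - a)).
have := Rabs_triang ((f y - a) * (g y - b)) (a * (g y - b)); rewrite !Rabs_mult.
have := Rabs_pos a; have := Rabs_pos b; have := Rabs_pos (f y - a); have := Rabs_pos (g y - b).
rewrite /M in e'M; nra.
Qed.

Lemma continuous_at_comp n (g : R -> R) (f : vec n -> R) x :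
  continuity_pt g (f x) -> continuous_at f x -> continuous_at (fun y => g (f y)) x.
Proof.
move=> cg cf e e_gt0.
have [a [a_gt0 near_g]] := cg e e_gt0.
have [d [d_gt0 near_f]] := cf a a_gt0.
exists d; split=> // y dyx.
case: (Req_dec (f y) (f x)) => [-> | fyx]; first by rewrite Rminus_diag Rabs_R0.
by apply: near_g; split; [split=> //; apply: not_eq_sym | apply: near_f].
Qed.

Lemma continuous_at_sum n m (F : 'I_m -> vec n -> R) x :
  (forall j, continuous_at (F j) x) ->
  continuous_at (fun y => \big[Rplus/0]_(j < m) F j y) x.
Proof.
rewrite /index_enum; move=> cF; elim: (Finite.enum _) => [|a s IH].
  have -> : (fun y => \big[Rplus/0]_(j <- [::]) F j y) = (fun _ => 0).
    by apply: functional_extensionality => y; rewrite big_nil.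
  exact: continuous_at_const.
have -> : (fun y => \big[Rplus/0]_(j <- a :: s) F j y) =
          (fun y => F a y + \big[Rplus/0]_(j <- s) F j y).
  by apply: functional_extensionality => y; rewrite big_cons.
exact: continuous_at_plus.
Qed.

Lemma continuous_on_closure_le n (O : vec n -> Prop) u c :
  continuous_on (Rn_closure O) u -> (forall x, O x -> u x <= c) ->
  forall x, Rn_closure O x -> u x <= c.
Proof.
move=> cont_u le_c x clx; apply: Rnot_lt_le => u_gt.
have [d [d_gt0 near_x]] := cont_u x clx (u x - c) ltac:(lra).
have [z [Oz dzx]] := clx d d_gt0.
by have := near_x z (Rn_closure_sub Oz) dzx; have := le_c z Oz; move=> ? /Rabs_def2 [? ?]; lra.
Qed.

Lemma continuous_on_plus n (C : vec n -> Prop) u h :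
  continuous_on C u -> (forall x, continuous_at h x) -> continuous_on C (fun x => u x + h x).
Proof.
move=> cont_u cont_h x Cx e e_gt0.
have [d1 [d1_gt0 near_u]] := cont_u x Cx (e / 2) ltac:(lra).
have [d2 [d2_gt0 near_h]] := cont_h x (e / 2) ltac:(lra).
exists (Rmin d1 d2); split=> [|y Cy dyx]; first exact: Rmin_pos.
have := near_u y Cy (Rlt_le_trans _ _ _ dyx (Rmin_l _ _)).
have := near_h y (Rlt_le_trans _ _ _ dyx (Rmin_r _ _)).
have := Rabs_triang (u y - u x) (h y - h x).
by rewrite (_ : u y - u x + (h y - h x) = u y + h y - (u x + h x)); [lra | ring].
Qed.

Lemma continuous_on_opp n (C : vec n -> Prop) u :
  continuous_on C u -> continuous_on C (fun x => - u x).
Proof.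
move=> cont_u x Cx e e_gt0; have [d [d_gt0 near_x]] := cont_u x Cx e e_gt0.
exists d; split=> // y Cy dyx.
by rewrite (_ : - u y - - u x = - (u y - u x)) ?Rabs_Ropp; [apply: near_x | ring].
Qed.

(** * Partial derivatives *)

Lemma partial_eq n (f : vec n -> R) i x l l' : partial f i x l -> l = l' -> partial f i x l'.
Proof. by move=> ? <-. Qed.

Lemma partial_const n (c : R) i (x : vec n) : partial (fun _ => c) i x 0.
Proof. exact: derivable_pt_lim_const. Qed.

Lemma partial_coord n j i (x : vec n) :
  partial (fun y => y j) i x (if j == i then 1 else 0).
Proof.
rewrite /partial /shift; case: (j == i); last exact: derivable_pt_lim_const.
have := derivable_pt_lim_plus (fun _ => x j) id 0 0 1
  (derivable_pt_lim_const _ _) (derivable_pt_lim_id 0).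
by rewrite Rplus_0_l.
Qed.

Lemma partial_plus n (f g : vec n -> R) i x lf lg :
  partial f i x lf -> partial g i x lg -> partial (fun y => f y + g y) i x (lf + lg).
Proof. exact: derivable_pt_lim_plus. Qed.

Lemma partial_opp n (f : vec n -> R) i x lf :
  partial f i x lf -> partial (fun y => - f y) i x (- lf).
Proof. exact: derivable_pt_lim_opp. Qed.

Lemma partial_minus n (f g : vec n -> R) i x lf lg :
  partial f i x lf -> partial g i x lg -> partial (fun y => f y - g y) i x (lf - lg).
Proof. by move=> df dg; apply: (partial_plus df (partial_opp dg)). Qed.

Lemma shift0 n (x : vec n) i : shift x i 0 = x.
Proof. by apply: functional_extensionality => j; rewrite /shift; case: (j == i); ring. Qed.

Lemma shiftD n (x : vec n) i a b : shift (shift x i a) i b = shift x i (a + b).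
Proof. by apply: functional_extensionality => j; rewrite /shift; case: (j == i); ring. Qed.

Lemma partial_mult n (f g : vec n -> R) i x lf lg :
  partial f i x lf -> partial g i x lg ->
  partial (fun y => f y * g y) i x (lf * g x + f x * lg).
Proof.
by move=> df dg; have := derivable_pt_lim_mult _ _ _ _ _ df dg; rewrite /mult_fct shift0.
Qed.

Lemma partial_comp n (g : R -> R) (f : vec n -> R) i x lf lg :
  partial f i x lf -> derivable_pt_lim g (f x) lg ->
  partial (fun y => g (f y)) i x (lg * lf).
Proof.
move=> df dg; apply: (derivable_pt_lim_comp _ _ _ _ _ df).
by rewrite /= shift0.
Qed.

Lemma partial_sum n m (F : 'I_m -> vec n -> R) (l : 'I_m -> R) i x :
  (forall j, partial (F j) i x (l j)) ->
  partial (fun y => \big[Rplus/0]_(j < m) F j y) i x (\big[Rplus/0]_(j < m) l j).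
Proof.
rewrite /index_enum; move=> dF; elim: (Finite.enum _) => [|a s IH].
  rewrite big_nil /partial (_ : (fun t => _) = fun _ => 0); first exact: derivable_pt_lim_const.
  by apply: functional_extensionality => t; rewrite big_nil.
rewrite big_cons /partial (_ : (fun t => _) =
  fun t => F a (shift x i t) + \big[Rplus/0]_(j <- s) F j (shift x i t)).
  exact: (partial_plus (dF a) IH).
by apply: functional_extensionality => t; rewrite big_cons.
Qed.

(** * The test function *)

Definition sqdist n (p x : vec n) : R := \big[Rplus/0]_(j < n) ((x j - p j) * (x j - p j)).
Definition gauss n (k : R) (p x : vec n) : R := exp (- k * sqdist p x).

Lemma sqdistE n (p x : vec n) : sqdist p x = Defs.dist x p * Defs.dist x p.
Proof. by rewrite dist_sqr. Qed.

Lemma sqdist_xx n (y : vec n) : sqdist y y = 0.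
Proof. by rewrite /sqdist big1 // => j _; ring. Qed.

Lemma gauss_gt0 n k (p x : vec n) : 0 < gauss k p x.
Proof. exact: exp_pos. Qed.

Lemma gauss_le1 n k (p x : vec n) : 0 <= k -> gauss k p x <= 1.
Proof.
move=> k_ge0; rewrite /gauss -exp_0.
have : 0 <= sqdist p x by rewrite sqdistE; apply: sqr_ge0.
move=> s_ge0; case: (Rle_lt_or_eq_dec (- k * sqdist p x) 0 ltac:(nra)) => [s_lt0 | ->].
  by left; apply: exp_increasing.
by right.
Qed.

Lemma continuous_at_sqdist n (p x : vec n) : continuous_at (sqdist p) x.
Proof.
rewrite /sqdist; apply: (continuous_at_sum (F := fun j y => (y j - p j) * (y j - p j))) => j.
by apply: continuous_at_mult; apply: continuous_at_minus;
  [apply: continuous_at_coord | apply: continuous_at_const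
  | apply: continuous_at_coord | apply: continuous_at_const].
Qed.

Lemma continuous_at_gauss n k (p x : vec n) : continuous_at (gauss k p) x.
Proof.
apply: (continuous_at_comp (g := exp) (f := fun y => - k * sqdist p y)).
  exact: derivable_continuous_pt (derivable_pt_exp _).
by apply: continuous_at_mult; [apply: continuous_at_const | apply: continuous_at_sqdist].
Qed.

Lemma partial_sqdist n (p : vec n) i x : partial (sqdist p) i x (2 * (x i - p i)).
Proof.
apply: (partial_eq (l := \big[Rplus/0]_(j < n)
   ((kron j i - 0) * (x j - p j) + (x j - p j) * (kron j i - 0)))).
  apply: (partial_sum (F := fun j y => (y j - p j) * (y j - p j))) => j.
  by apply: partial_mult; apply: partial_minus;
    [apply: partial_coord | apply: partial_const | apply: partial_coord | apply: partial_const].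
rewrite -(sumR_kronecker (fun j => 2 * (x j - p j)) i).
by apply: eq_bigr => j _; rewrite /kron eq_sym; ring.
Qed.

Lemma partial_gauss n k (p : vec n) i x :
  partial (gauss k p) i x (- 2 * k * (x i - p i) * gauss k p x).
Proof.
apply: (partial_eq (l := exp (- k * sqdist p x) * (0 * sqdist p x + - k * (2 * (x i - p i))))).
  apply: (partial_comp (g := exp) (f := fun y => - k * sqdist p y)).
    by apply: partial_mult; [apply: partial_const | apply: partial_sqdist].
  exact: derivable_pt_lim_exp.
by rewrite /gauss; ring.
Qed.

Ltac continuity_tac :=
  repeat match goal with
  | |- continuous_at (fun _ => ?c) _ => apply: continuous_at_const
  | |- continuous_at (fun y => y ?j) _ => apply: continuous_at_coord
  | |- continuous_at (fun y => sqdist ?p y) _ => apply: continuous_at_sqdist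
  | |- continuous_at (fun y => gauss ?k ?p y) _ => apply: continuous_at_gauss
  | |- continuous_at (fun y => @?A y + @?B y) _ => apply: (continuous_at_plus (f := A) (g := B))
  | |- continuous_at (fun y => @?A y - @?B y) _ => apply: (continuous_at_minus (f := A) (g := B))
  | |- continuous_at (fun y => @?A y * @?B y) _ => apply: (continuous_at_mult (f := A) (g := B))
  end.

Ltac partial_tac :=
  match goal with
  | |- partial (fun _ => ?c) _ _ _ => apply: partial_const
  | |- partial (fun y => y ?j) _ _ _ => apply: partial_coord
  | |- partial (fun y => sqdist ?p y) _ _ _ => apply: partial_sqdist
  | |- partial (fun y => gauss ?k ?p y) _ _ _ => apply: partial_gauss
  | |- partial (fun y => @?A y + @?B y) _ _ _ => apply: (partial_plus (f := A) (g := B)); partial_tac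
  | |- partial (fun y => @?A y - @?B y) _ _ _ => apply: (partial_minus (f := A) (g := B)); partial_tac
  | |- partial (fun y => @?A y * @?B y) _ _ _ => apply: (partial_mult (f := A) (g := B)); partial_tac
  end.

(* Touches u from above at a maximiser y of u + d * gauss k p; the quartic term makes the
   contact strict. *)
Definition test_fun n (k d c : R) (p y x : vec n) : R :=
  c - d * gauss k p x + sqdist y x * sqdist y x.
Definition test_grad n (k d : R) (p y x : vec n) (i : 'I_n) : R :=
  d * (2 * k * (x i - p i) * gauss k p x) + 4 * sqdist y x * (x i - y i).
Definition test_hess n (k d : R) (p y x : vec n) (i j : 'I_n) : R :=
  d * (2 * k * kron i j - 4 * (k * k) * (x i - p i) * (x j - p j)) * gauss k p x
  + 8 * (x i - y i) * (x j - y j) + 4 * sqdist y x * kron i j.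

Lemma test_fun_C2 n (U : vec n -> Prop) k d c (p y : vec n) :
  C2_on U (test_fun k d c p y) (test_grad k d p y) (test_hess k d p y).
Proof.
move=> x _; split; [|split].
- by rewrite /test_fun; continuity_tac.
- move=> i; split; last by rewrite /test_grad; continuity_tac.
  apply: partial_eq; first by rewrite /test_fun; partial_tac.
  by rewrite /test_grad; ring.
- move=> i j; split; last by rewrite /test_hess; continuity_tac.
  apply: partial_eq; first by rewrite /test_grad; partial_tac.
  by rewrite /test_hess /kron; case: (i == j); ring.
Qed.

Lemma test_fun_center n k d c (p y : vec n) : test_fun k d c p y y = c - d * gauss k p y.
Proof. by rewrite /test_fun sqdist_xx; ring. Qed.

Lemma test_grad_center n k d (p y : vec n) :
  test_grad k d p y y = vscale (2 * d * k * gauss k p y) (vsub y p).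
Proof.
by apply: functional_extensionality => i; rewrite /test_grad /vscale /vsub sqdist_xx; ring.
Qed.

(* The quartic term has zero gradient and Hessian at y, so only the Gaussian contributes. *)
Lemma quad_test_hess_center n k d (p y : vec n) :
  quad (test_hess k d p y y) (test_grad k d p y y) =
  8 * (d * d * d) * (k * k * k) * (gauss k p y * gauss k p y * gauss k p y)
    * sqdist p y * (1 - 2 * k * sqdist p y).
Proof.
set G := gauss k p y; set s := sqdist p y; set c := 2 * d * k * G.
rewrite test_grad_center /quad.
have inner i : \big[Rplus/0]_(j < n) (test_hess k d p y y i j * vscale c (vsub y p) i
                                        * vscale c (vsub y p) j)
    = (2 * k * d * G * c * c - 4 * (k * k) * d * G * c * c * s) * ((y i - p i) * (y i - p i)).
  transitivity (\big[Rplus/0]_(j < n)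
     (2 * k * d * G * c * c * (y i - p i) * ((y j - p j) * kron i j)
      + - (4 * (k * k) * d * G * c * c * (y i - p i) * (y i - p i)) * ((y j - p j) * (y j - p j)))).
    by apply: eq_bigr => j _; rewrite /test_hess /vscale /vsub sqdist_xx -/G; ring.
  rewrite sumR_add !sumR_mull sumR_kronecker -/(sqdist p y) -/s; ring.
rewrite (eq_bigr _ (fun i _ => inner i)) sumR_mull -/(sqdist p y) -/s /c; ring.
Qed.

Lemma quad_test_hess_center_lt0 n k d (p y : vec n) :
  0 < d -> 0 < k -> 1 < 2 * k * sqdist p y ->
  quad (test_hess k d p y y) (test_grad k d p y y) < 0.
Proof.
move=> d_gt0 k_gt0 far; rewrite quad_test_hess_center.
have G_gt0 := gauss_gt0 k p y.
have s_gt0 : 0 < sqdist p y by nra.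
have : 0 < 8 * (d * d * d) * (k * k * k) * (gauss k p y * gauss k p y * gauss k p y)
           * sqdist p y by repeat apply: Rmult_lt_0_compat => //; lra.
nra.
Qed.

(** * Compactness *)

Definition strict_incr (phi : nat -> nat) : Prop := forall k, (phi k < phi (S k))%coq_nat.

Definition Rn_cvg n (X : nat -> vec n) (l : vec n) : Prop :=
  forall e, 0 < e -> exists N, forall k, (N <= k)%coq_nat -> Defs.dist (X k) l < e.

Lemma strict_incr_ge phi : strict_incr phi -> forall k, (k <= phi k)%coq_nat.
Proof. by move=> incr_phi; elim=> [|k IH]; [lia | have := incr_phi k; lia]. Qed.

Lemma strict_incr_le phi : strict_incr phi ->
  forall a b, (a <= b)%coq_nat -> (phi a <= phi b)%coq_nat.
Proof.
move=> incr_phi a; elim=> [|b IH] ab; first by have -> : a = 0%nat by lia.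
by case: (Nat.eq_dec a (S b)) => [-> | ?]; [lia | have := IH ltac:(lia); have := incr_phi b; lia].
Qed.

Lemma strict_incr_comp phi psi :
  strict_incr phi -> strict_incr psi -> strict_incr (fun k => phi (psi k)).
Proof.
move=> incr_phi incr_psi k.
by have := strict_incr_le incr_phi (incr_psi k); have := incr_phi (psi k); lia.
Qed.

Lemma Un_cv_subseq u l psi : Un_cv u l -> strict_incr psi -> Un_cv (fun k => u (psi k)) l.
Proof.
move=> cv_u incr_psi e e_gt0; have [N near_l] := cv_u e e_gt0; exists N => k kN.
by apply: near_l; have := strict_incr_ge incr_psi k; lia.
Qed.

Lemma INR_inv_lt e : 0 < e -> exists N, forall k, (N <= k)%coq_nat -> / INR (S k) < e.
Proof.
move=> e_gt0; have [N N_gt] := INR_unbounded (/ e); exists N => k kN.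
have : INR N <= INR k by apply: le_INR.
rewrite -[e]Rinv_inv S_INR => ?; apply: Rinv_lt_contravar; last lra.
by apply: Rmult_lt_0_compat; [apply: Rinv_0_lt_compat | have := pos_INR k]; lra.
Qed.

Lemma bounded_seq_cv_subseq (u : nat -> R) M : (forall k, Rabs (u k) <= M) ->
  exists phi, strict_incr phi /\ exists l, Un_cv (fun k => u (phi k)) l.
Proof.
move=> u_bounded.
have [l adh_l] := Bolzano_Weierstrass u (fun c => - M <= c <= M) (compact_P3 (- M) M)
  (fun k => ltac:(have := Rle_abs (u k); have := Rle_abs (- u k);
                  rewrite Rabs_Ropp; have := u_bounded k; lra)).
have close_terms (Nk : nat * nat) :
    exists p, (Nk.1 <= p)%coq_nat /\ Rabs (u p - l) < / INR (S Nk.2).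
  have pos : 0 < / INR (S Nk.2) by apply: Rinv_0_lt_compat; apply: lt_0_INR; lia.
  have [p [Np disc_p]] := adh_l (disc l (mkposreal _ pos)) Nk.1
    (ex_intro _ (mkposreal _ pos) (fun y disc_y => disc_y)).
  by exists p.
have [pick pickP] := choice _ close_terms.
pose fix phi k := if k is S k' then pick (S (phi k'), S k') else pick (0%nat, 0%nat).
exists phi; split; first by move=> k /=; have [] := pickP (S (phi k), S k); rewrite /=; lia.
exists l => e e_gt0; have [N smallN] := INR_inv_lt e_gt0; exists N => k kN.
apply: Rlt_trans (smallN k kN); rewrite /R_dist.
by case: k {kN} => [|k]; [exact: (pickP (0, 0)%nat).2 | exact: (pickP (_, _)).2].
Qed.

Lemma eventually_forall_ord n (P : 'I_n -> nat -> Prop) :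
  (forall i, exists N, forall k, (N <= k)%coq_nat -> P i k) ->
  exists N, forall i k, (N <= k)%coq_nat -> P i k.
Proof.
move=> ev.
suff [N evN] : exists N, forall i, i \in enum 'I_n -> forall k, (N <= k)%coq_nat -> P i k.
  by exists N => i; apply: evN; rewrite mem_enum.
elim: (enum 'I_n) => [|a s [N IH]]; first by exists 0%nat.
have [Na eva] := ev a; exists (Nat.max N Na) => i.
by rewrite in_cons => /orP [/eqP -> | si] k kN; [apply: eva | apply: IH] => //; lia.
Qed.

Lemma bounded_seq_coordwise_subseq n (X : nat -> vec n) M :
  (forall k i, Rabs (X k i) <= M) ->
  exists phi, strict_incr phi /\ forall i, exists l, Un_cv (fun k => X (phi k) i) l.
Proof.
move=> X_bounded.
suff [phi [incr_phi cv]] : exists phi, strict_incr phi /\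
    forall i, i \in enum 'I_n -> exists l, Un_cv (fun k => X (phi k) i) l.
  by exists phi; split=> // i; apply: cv; rewrite mem_enum.
elim: (enum 'I_n) => [|a s [phi [incr_phi IH]]].
  by exists (fun k => k); split=> // k; lia.
have [psi [incr_psi [la cv_a]]] := bounded_seq_cv_subseq (fun k => X_bounded (phi k) a).
exists (fun k => phi (psi k)); split; first exact: strict_incr_comp.
move=> i; rewrite in_cons => /orP [/eqP -> | si]; first by exists la.
by have [l cv_i] := IH i si; exists l; apply: (Un_cv_subseq (u := fun k => X (phi k) i)).
Qed.

Lemma Rn_cvg_coordwise n (X : nat -> vec n) (l : vec n) :
  (forall i, Un_cv (fun k => X k i) (l i)) -> Rn_cvg X l.
Proof.
move=> cv e e_gt0.
set eta := e / (INR n + 1).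
have n_ge0 := pos_INR n.
have eta_gt0 : 0 < eta by apply: Rdiv_lt_0_compat; lra.
have [N close] := eventually_forall_ord (P := fun i k => Rabs (X k i - l i) < eta)
  (fun i => cv i eta eta_gt0).
exists N => k kN.
have dist_sqr_le : Defs.dist (X k) l * Defs.dist (X k) l <= INR n * (eta * eta).
  rewrite dist_sqr -sumR_const; apply: sumR_le => i.
  have := Rsqr_abs (X k i - l i); rewrite /Rsqr => ->.
  by have := close i k kN; have := Rabs_pos (X k i - l i); nra.
have eta_e : eta * (INR n + 1) = e by rewrite /eta; field; lra.
by have := dist_ge0 (X k) l; nra.
Qed.

Lemma closed_bounded_seq_compact n (C : vec n -> Prop) (X : nat -> vec n) :
  Rn_bounded C -> Rn_closed C -> (forall k, C (X k)) ->
  exists phi l, strict_incr phi /\ C l /\ Rn_cvg (fun k => X (phi k)) l.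
Proof.
move=> [M boundM] closedC CX.
have [phi [incr_phi cv]] := bounded_seq_coordwise_subseq (M := M)
  (fun k i => Rle_trans _ _ _ (coord_le_vnorm (X k) i) (boundM _ (CX k))).
have [l lP] := choice _ cv.
have cvg_l := Rn_cvg_coordwise lP.
exists phi, l; split=> //; split=> //; apply: closedC => e e_gt0.
by have [N close] := cvg_l e e_gt0; exists (X (phi N)); split=> //; apply: close.
Qed.

Lemma continuous_on_bounded_above n (C : vec n -> Prop) (f : vec n -> R) :
  Rn_bounded C -> Rn_closed C -> continuous_on C f -> exists b, forall x, C x -> f x <= b.
Proof.
move=> bounded_C closed_C cont_f; apply: NNPP => unbounded.
have large k : exists x, C x /\ INR k < f x.
  apply: NNPP => none; apply: unbounded; exists (INR k) => x Cx.
  by apply: Rnot_lt_le => fx; apply: none; exists x.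
have [X XP] := choice _ large.
have [phi [l [incr_phi [Cl cvg_l]]]] :=
  closed_bounded_seq_compact bounded_C closed_C (fun k => proj1 (XP k)).
have [d [d_gt0 near_l]] := cont_f l Cl 1 Rlt_0_1.
have [N close] := cvg_l d d_gt0.
have [K K_large] := INR_unbounded (f l + 1).
set k := Nat.max N K.
have := near_l _ (proj1 (XP (phi k))) (close k ltac:(lia)).
have := proj2 (XP (phi k)).
have : INR K <= INR (phi k) by apply: le_INR; have := strict_incr_ge incr_phi k; lia.
by move=> ? ? /Rabs_def2 [? ?]; lra.
Qed.

Lemma continuous_on_attains_max n (C : vec n -> Prop) (f : vec n -> R) :
  Rn_bounded C -> Rn_closed C -> (exists x, C x) -> continuous_on C f ->
  exists y, C y /\ forall x, C x -> f x <= f y.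
Proof.
move=> bounded_C closed_C [x0 Cx0] cont_f.
pose values r := exists x, C x /\ r = f x.
have [b boundb] := continuous_on_bounded_above bounded_C closed_C cont_f.
have bound_values : bound values by exists b => r [x [Cx ->]]; apply: boundb.
have [L [L_ub L_least]] :=
  completeness values bound_values (ex_intro _ (f x0) (ex_intro _ x0 (conj Cx0 erefl))).
have le_L x : C x -> f x <= L by move=> Cx; apply: L_ub; exists x.
have approx k : exists x, C x /\ L - / INR (S k) < f x.
  apply: NNPP => none.
  have pos : 0 < / INR (S k) by apply: Rinv_0_lt_compat; apply: lt_0_INR; lia.
  suff : L <= L - / INR (S k) by lra.
  by apply: L_least => r [x [Cx ->]]; apply: Rnot_lt_le => fx; apply: none; exists x.
have [X XP] := choice _ approx.
have [phi [l [incr_phi [Cl cvg_l]]]] :=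
  closed_bounded_seq_compact bounded_C closed_C (fun k => proj1 (XP k)).
exists l; split=> // x Cx; apply: Rle_trans (le_L x Cx) _.
apply: Rnot_lt_le => fl_lt; set e := (L - f l) / 2.
have e_gt0 : 0 < e by rewrite /e; lra.
have [d [d_gt0 near_l]] := cont_f l Cl e e_gt0.
have [N close] := cvg_l d d_gt0.
have [K small] := INR_inv_lt e_gt0.
set k := Nat.max N K.
have := near_l _ (proj1 (XP (phi k))) (close k ltac:(lia)).
have := proj2 (XP (phi k)).
have := small (phi k) ltac:(have := strict_incr_ge incr_phi k; lia).
move=> ? ? /Rabs_def2 [? ?].
have : 2 * e = L - f l by rewrite /e; field.
lra.
Qed.

(** * Directional derivatives and convex domains *)

Lemma mvt_from0 (h h' : R -> R) b :
  (forall s, derivable_pt_lim h s (h' s)) ->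
  exists c, Rabs c <= Rabs b /\ h b - h 0 = h' c * b.
Proof.
move=> dh; case: (Rtotal_order b 0) => [b_lt0 | [-> | b_gt0]].
- have [c [eq_c c_in]] := MVT_cor2 h h' b 0 b_lt0 (fun c _ => dh c).
  exists c; split; first by rewrite !Rabs_left; lra.
  have -> : h b - h 0 = - (h 0 - h b) by ring.
  by rewrite eq_c; ring.
- by exists 0; split; [lra | ring].
- have [c [eq_c c_in]] := MVT_cor2 h h' 0 b b_gt0 (fun c _ => dh c).
  by exists c; split; [rewrite !Rabs_right; lra | rewrite eq_c; ring].
Qed.

Lemma derivable_pt_lim_shift (h : R -> R) s l :
  derivable_pt_lim (fun u => h (s + u)) 0 l -> derivable_pt_lim h s l.
Proof.
move=> dh e e_gt0; have [d close] := dh e e_gt0; exists d => u u_neq0 u_small.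
by have := close u u_neq0 u_small; rewrite Rplus_0_l Rplus_0_r.
Qed.

Lemma coord_increment n (F : vec n -> R) (G : 'I_n -> vec n -> R) i x h a eps :
  (forall x, partial F i x (G i x)) ->
  (forall c, Rabs c <= Rabs h -> Rabs (G i (shift x i c) - a) <= eps) ->
  Rabs (F (shift x i h) - F x - a * h) <= eps * Rabs h.
Proof.
move=> dF G_close.
have dline s : derivable_pt_lim (fun t => F (shift x i t)) s (G i (shift x i s)).
  apply: derivable_pt_lim_shift; have := dF (shift x i s); rewrite /partial.
  have -> : (fun u => F (shift (shift x i s) i u)) = (fun u => F (shift x i (s + u))).
    by apply: functional_extensionality => u; rewrite shiftD.
  done.
have [c [c_small incr]] := mvt_from0 h dline.
rewrite shift0 in incr; rewrite incr.
have -> : G i (shift x i c) * h - a * h = (G i (shift x i c) - a) * h by ring.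
by rewrite Rabs_mult; apply: Rmult_le_compat_r; [apply: Rabs_pos | apply: G_close].
Qed.

Definition coord_path n (y w : vec n) (t : R) (m : nat) : vec n :=
  fun j => y j + (if (j < m)%nat then t * w j else 0).

Lemma coord_path0 n (y w : vec n) t : coord_path y w t 0 = y.
Proof. by apply: functional_extensionality => j; rewrite /coord_path ltn0; ring. Qed.

Lemma coord_path_full n (y w : vec n) t : coord_path y w t n = fun j => y j + t * w j.
Proof. by apply: functional_extensionality => j; rewrite /coord_path ltn_ord. Qed.

Lemma ord_neq_val n (j i : 'I_n) : j != i -> (j : nat) != i.
Proof. by apply: contra => /eqP ji; apply/eqP; apply: val_inj. Qed.

Lemma coord_path_step n (y w : vec n) t m (mn : (m < n)%nat) :
  coord_path y w t m.+1 = shift (coord_path y w t m) (Ordinal mn) (t * w (Ordinal mn)).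
Proof.
apply: functional_extensionality => j; rewrite /shift /coord_path.
case: (eqVneq j (Ordinal mn)) => [-> | /ord_neq_val jm] /=; first by rewrite ltnSn ltnn; ring.
by rewrite ltnS leq_eqVlt (negbTE jm).
Qed.

Lemma sumR_lt_step n m (mn : (m < n)%nat) (F : 'I_n -> R) :
  \big[Rplus/0]_(j < n | (j < m.+1)%nat) F j =
  \big[Rplus/0]_(j < n | (j < m)%nat) F j + F (Ordinal mn).
Proof.
rewrite (bigD1 (Ordinal mn)) /= ?ltnSn // Rplus_comm; congr (_ + _).
apply: eq_bigl => j; case: (eqVneq j (Ordinal mn)) => [-> | /ord_neq_val jm] /=.
  by rewrite ltnn ltnSn.
by rewrite andbT ltnS leq_eqVlt (negbTE jm).
Qed.

Lemma dist_shift_coord_path n (y w : vec n) t m (mn : (m < n)%nat) c :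
  0 <= t -> Rabs c <= Rabs (t * w (Ordinal mn)) ->
  Defs.dist (shift (coord_path y w t m) (Ordinal mn) c) y <= t * vnorm w.
Proof.
move=> t_ge0 c_small.
have tw_ge0 : 0 <= t * vnorm w by apply: Rmult_le_pos => //; apply: vnorm_ge0.
apply: Rsqr_incr_0_var; last exact: tw_ge0.
rewrite /Rsqr dist_sqr (_ : t * vnorm w * (t * vnorm w) = t * t * (vnorm w * vnorm w)); last ring.
rewrite vnorm_sqr /dot -sumR_mull; apply: sumR_le => j.
rewrite (_ : t * t * (w j * w j) = (t * w j) * (t * w j)); last ring.
apply: Rsqr_le_abs_1; rewrite /shift /coord_path.
case: (eqVneq j (Ordinal mn)) => [-> | _] /=.
  by rewrite ltnn (_ : y (Ordinal mn) + 0 + c - y (Ordinal mn) = c) //; ring.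
case: (j < m)%nat.
  by rewrite (_ : y j + t * w j - y j = t * w j); [lra | ring].
by rewrite (_ : y j + 0 - y j = 0) ?Rabs_R0; [apply: Rabs_pos | ring].
Qed.

(* Mean value theorem on each step of the staircase coord_path y w t 0, ..., coord_path y w t n. *)
Lemma first_order_lower_bound n (F : vec n -> R) (G : 'I_n -> vec n -> R) (y w : vec n) t eps d :
  (forall i x, partial F i x (G i x)) ->
  (forall i x, Defs.dist x y < d -> Rabs (G i x - G i y) <= eps) ->
  0 <= t -> t * vnorm w < d ->
  t * \big[Rplus/0]_(i < n) (G i y * w i) - t * eps * \big[Rplus/0]_(i < n) Rabs (w i)
    <= F (fun j => y j + t * w j) - F y.
Proof.
move=> dF G_close t_ge0 tw_small.
suff step m : (m <= n)%nat ->
    t * \big[Rplus/0]_(i < n | (i < m)%nat) (G i y * w i)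
    - t * eps * \big[Rplus/0]_(i < n | (i < m)%nat) Rabs (w i)
    <= F (coord_path y w t m) - F y.
  by have := step n (leqnn n); rewrite coord_path_full !(eq_bigl _ _ (fun j : 'I_n => ltn_ord j)).
elim: m => [|m IH] mn.
  by rewrite coord_path0 !(big_pred0 _ _ _ _ (fun j : 'I_n => ltn0 j)); lra.
rewrite (coord_path_step _ _ _ mn) !(sumR_lt_step mn).
set i := Ordinal mn; set x := coord_path y w t m.
have inc : Rabs (F (shift x i (t * w i)) - F x - G i y * (t * w i)) <= eps * Rabs (t * w i).
  apply: coord_increment => [z | c c_small]; first exact: dF.
  apply: G_close; apply: Rle_lt_trans tw_small.
  exact: dist_shift_coord_path.
have := Rle_abs (- (F (shift x i (t * w i)) - F x - G i y * (t * w i))).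
rewrite Rabs_Ropp Rabs_mult (Rabs_pos_eq t t_ge0) in inc *.
rewrite (_ : eps * (t * Rabs (w i)) = t * eps * Rabs (w i)) in inc; last ring.
by have := IH (ltnW mn); rewrite -/x; lra.
Qed.

Lemma directional_deriv_nonpos n (F : vec n -> R) (G : 'I_n -> vec n -> R) (y w : vec n) T :
  (forall i x, partial F i x (G i x)) -> (forall i, continuous_at (G i) y) -> 0 < T ->
  (forall t, 0 < t <= T -> F (fun j => y j + t * w j) <= F y) ->
  \big[Rplus/0]_(i < n) (G i y * w i) <= 0.
Proof.
move=> dF cont_G T_gt0 decr; apply: Rnot_lt_le => slope_gt0.
set slope := \big[Rplus/0]_(i < n) (G i y * w i) in slope_gt0 *.
set W := \big[Rplus/0]_(i < n) Rabs (w i).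
have W_ge0 : 0 <= W by apply: sumR_ge0 => i; apply: Rabs_pos.
set eps := slope / (2 * (W + 1)).
have eps_gt0 : 0 < eps by apply: Rdiv_lt_0_compat; lra.
have epsW : eps * W <= slope / 2.
  rewrite /eps (_ : slope / (2 * (W + 1)) * W = slope / 2 * (W / (W + 1))); last by field; lra.
  have : W / (W + 1) <= 1 by apply: (Rmult_le_reg_r (W + 1)); [lra | field_simplify; lra].
  by nra.
have [N G_close] : exists N, forall i k, (N <= k)%coq_nat ->
    forall x, Defs.dist x y < / INR (S k) -> Rabs (G i x - G i y) <= eps.
  apply: eventually_forall_ord => i; have [d [d_gt0 near_y]] := cont_G i eps eps_gt0.
  have [K small] := INR_inv_lt d_gt0.
  by exists K => k kK x dxy; left; apply: near_y; have := small k kK; lra.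
set d := / INR (S N).
have d_gt0 : 0 < d by apply: Rinv_0_lt_compat; apply: lt_0_INR; lia.
have w_ge0 := vnorm_ge0 w.
set t := Rmin T (d / (2 * (vnorm w + 1))).
have t_gt0 : 0 < t by apply: Rmin_pos => //; apply: Rdiv_lt_0_compat; lra.
have tw_small : t * vnorm w < d.
  apply: (Rle_lt_trans _ (d / (2 * (vnorm w + 1)) * vnorm w)).
    by apply: Rmult_le_compat_r => //; apply: Rmin_r.
  rewrite (_ : d / (2 * (vnorm w + 1)) * vnorm w = d * (vnorm w / (2 * (vnorm w + 1))));
    last by field; lra.
  have : vnorm w / (2 * (vnorm w + 1)) < 1.
    by apply: (Rmult_lt_reg_r (2 * (vnorm w + 1))); [lra | field_simplify; lra].
  by nra.
have := first_order_lower_bound dF (fun i x => G_close i N (le_n N) x) (Rlt_le _ _ t_gt0) tw_small.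
have := decr t (conj t_gt0 (Rmin_l _ _)).
by rewrite -/slope -/W; nra.
Qed.

(* y + t (z - y) = t z' + (1 - t) y' for some y' in O near y and z' := z + ((1 - t) / t) (y - y'),
   which lies in B(z, r). *)
Lemma convex_closure_segment n (O : vec n -> Prop) (y z : vec n) r t :
  Rn_convex O -> Rn_closure O y -> 0 < r -> (forall x, Defs.dist x z < r -> O x) ->
  0 < t <= 1 -> O (fun j => y j + t * (z j - y j)).
Proof.
move=> convO cly r_gt0 ballO t_in.
case: (Req_dec t 1) => [-> | t_neq1].
  by rewrite (_ : (fun j => _) = z); [apply: ballO; rewrite dist_xx |
              apply: functional_extensionality => j; ring].
set c := (1 - t) / t.
have c_gt0 : 0 < c by apply: Rdiv_lt_0_compat; lra.
have [y' [Oy' dy'y]] := cly (r / c) ltac:(apply: Rdiv_lt_0_compat; lra).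
set z' := fun j => z j + c * (y j - y' j).
have Oz' : O z'.
  apply: ballO.
  have -> : Defs.dist z' z = Defs.dist (fun j => c * y j) (fun j => c * y' j).
    by rewrite /Defs.dist /vnorm /dot; congr sqrt; apply: eq_bigr => j _; rewrite /vsub /z'; ring.
  rewrite dist_scale; last lra. rewrite distC.
  by rewrite (_ : r = c * (r / c)); [apply: Rmult_lt_compat_l | field; lra].
have -> : (fun j => y j + t * (z j - y j)) = vadd (vscale t z') (vscale (1 - t) y').
  by apply: functional_extensionality => j; rewrite /vadd /vscale /z' /c; field; lra.
by apply: convO => //; lra.
Qed.

Lemma defining_function_boundary n (O : vec n -> Prop) rho Drho y :
  defining_function O rho Drho -> Rn_closure O y -> ~ O y -> rho y = 0.
Proof.
move=> [smooth_rho [_ [O_neg _]]] cly Ony.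
have rho_ge0 : 0 <= rho y by apply: Rnot_lt_le => neg; apply: Ony; apply/O_neg.
case: rho_ge0 => // rho_gt0.
have [d [d_gt0 near_y]] := smooth_rho 0%nat y (rho y) rho_gt0.
have [z [Oz dzy]] := cly d d_gt0.
by have := near_y z dzy; move/O_neg: Oz => ? /Rabs_def2 [_ ?]; lra.
Qed.

(* The segment from y to z := p + (r / 2) Drho y / |Drho y| runs inside O, where rho < 0 = rho y,
   so Drho y . (z - y) <= 0. *)
Lemma convex_normal_pos n (O : vec n -> Prop) rho Drho (y p : vec n) r :
  Rn_convex O -> defining_function O rho Drho -> Rn_closure O y -> ~ O y -> 0 < r ->
  (forall z, Defs.dist z p < r -> O z) ->
  0 < dot (vsub y p) (Drho y).
Proof.
move=> convO dfO cly Ony r_gt0 ballO.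
have rho_y := defining_function_boundary dfO cly Ony.
have [smooth_rho [dDrho [O_neg Drho_neq0]]] := dfO.
have [_ [D [dD cont_D]]] := smooth_rho 1%nat.
have DrhoE x i : Drho x i = D i x := uniqueness_limite _ _ _ _ (dDrho x i) (dD i x).
have N_gt0 := vnorm_gt0 (Drho_neq0 y rho_y).
set N := vnorm (Drho y) in N_gt0.
set s := r / 2; have s_gt0 : 0 < s by rewrite /s; lra.
set z := fun j => p j + s / N * Drho y j.
have dzp : Defs.dist z p = s.
  have -> : Defs.dist z p = Defs.dist (fun j => s / N * Drho y j) (fun j => s / N * 0).
    by rewrite /Defs.dist /vnorm /dot; congr sqrt; apply: eq_bigr => j _; rewrite /vsub /z; ring.
  rewrite dist_scale; last by apply: Rle_mult_inv_pos; lra.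
  rewrite (_ : Defs.dist (Drho y) (fun _ => 0) = N); first by field; lra.
  by rewrite -vnorm_dist0.
have ball_z x : Defs.dist x z < s -> O x.
  move=> dxz; apply: ballO; have := dist_sqr_triangle x z p.
  by have := dist_ge0 x z; have := dist_ge0 x p; rewrite dzp /s in dxz *; nra.
have slope := directional_deriv_nonpos (w := fun j => z j - y j) dD
  (fun i => cont_D i y) Rlt_0_1
  (fun t t_in => ltac:(have /O_neg := convex_closure_segment convO cly s_gt0 ball_z t_in;
                       rewrite rho_y; lra)).
have : \big[Rplus/0]_(i < n) (D i y * (z i - y i)) = - dot (vsub y p) (Drho y) + s * N.
  rewrite (_ : s * N = s / N * dot (Drho y) (Drho y)); last by rewrite -vnorm_sqr -/N; field; lra.
  rewrite (_ : - dot (vsub y p) (Drho y) = -1 * dot (vsub y p) (Drho y)); last ring.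
  rewrite /dot -!sumR_mull -sumR_add.
  by apply: eq_bigr => j _; rewrite /z /vsub DrhoE; ring.
by have := Rmult_lt_0_compat _ _ s_gt0 N_gt0; lra.
Qed.

Lemma test_grad_outer_normal_pos n (O : vec n -> Prop) rho Drho (p y : vec n) k d r :
  Rn_convex O -> defining_function O rho Drho -> Rn_closure O y -> ~ O y -> 0 < r ->
  (forall z, Defs.dist z p < r -> O z) -> 0 < d -> 0 < k ->
  0 < dot (test_grad k d p y y) (vscale (/ vnorm (Drho y)) (Drho y)).
Proof.
move=> convO dfO cly Ony r_gt0 ballO d_gt0 k_gt0.
have normal_pos := convex_normal_pos convO dfO cly Ony r_gt0 ballO.
have [_ [_ [_ Drho_neq0]]] := dfO.
have N_gt0 := vnorm_gt0 (Drho_neq0 y (defining_function_boundary dfO cly Ony)).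
rewrite test_grad_center dot_scale.
have := gauss_gt0 k p y; have := Rinv_0_lt_compat _ N_gt0.
by move=> ? ?; repeat apply: Rmult_lt_0_compat => //; lra.
Qed.

(** * Viscosity subsolutions *)

Lemma vnorm_opp n (xi : vec n) : vnorm (fun i => - xi i) = vnorm xi.
Proof. by rewrite /vnorm /dot; congr sqrt; apply: eq_bigr => i _; ring. Qed.

Lemma quad_opp n (X : 'I_n -> 'I_n -> R) (xi : vec n) :
  quad (fun i j => - X i j) (fun i => - xi i) = - quad X xi.
Proof.
rewrite (_ : - quad X xi = -1 * quad X xi); last ring.
rewrite /quad -sumR_mull; apply: eq_bigr => i _.
by rewrite -sumR_mull; apply: eq_bigr => j _; ring.
Qed.

Lemma dot_oppl n (x y : vec n) : dot (fun i => - x i) y = - dot x y.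
Proof.
rewrite (_ : - dot x y = -1 * dot x y); last ring.
by rewrite /dot -sumR_mull; apply: eq_bigr => i _; ring.
Qed.

(* Reflecting u to -u exchanges F and G, up to sign. *)
Lemma Eop_opp n Lam a s (xi : vec n) (X : 'I_n -> 'I_n -> R) :
  Eop Lam (- a) s xi X = - Eop Lam a (- s) (fun i => - xi i) (fun i j => - X i j).
Proof.
rewrite /Eop /Fop /Gop /Hop vnorm_opp Rabs_Ropp quad_opp.
case: (Rlt_dec 0 (- a)) => ?; case: (Rlt_dec 0 a) => ? /=; try lra.
- case: (Rlt_dec a 0) => ? /=; last lra.
  by rewrite Ropp_Rmax Ropp_involutive; congr Rmin; ring.
- case: (Rlt_dec (- a) 0) => ? /=; last lra.
  by rewrite Ropp_Rmin Ropp_involutive; congr Rmax; ring.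
- case: (Rlt_dec (- a) 0) => ? /=; first lra.
  by case: (Rlt_dec a 0) => ? /=; [lra | ring].
Qed.

Lemma Eop_nonpos_ge n Lam a s (xi : vec n) (X : 'I_n -> 'I_n -> R) :
  a <= 0 -> - quad X xi <= Eop Lam a s xi X.
Proof.
move=> a_le0; rewrite /Eop.
case: (Rlt_dec 0 a) => ?; first lra.
by case: (Rlt_dec a 0) => ?; [apply: Rmax_r | apply: Rle_refl].
Qed.

Lemma C2_on_opp n (U : vec n -> Prop) phi g H :
  C2_on U phi g H ->
  C2_on U (fun x => - phi x) (fun x i => - g x i) (fun x i j => - H x i j).
Proof.
move=> C2 x Ux; have [cont_phi [dphi dg]] := C2 x Ux.
split; [exact: continuous_at_opp | split=> [i | i j]].
- by have [? ?] := dphi i; split; [apply: partial_opp | apply: continuous_at_opp].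
- by have [? ?] := dg i j; split; [apply: partial_opp | apply: continuous_at_opp].
Qed.

Lemma lsc_on_opp n (A : vec n -> Prop) u : lsc_on A u -> usc_on A (fun x => - u x).
Proof.
move=> lsc_u x Ax e e_gt0; have [d [d_gt0 near_x]] := lsc_u x Ax e e_gt0.
by exists d; split=> // y Ay dyx; have := near_x y Ay dyx; lra.
Qed.

Lemma visc_super_opp n (O : vec n -> Prop) Lam u :
  visc_super O Lam u -> visc_sub O Lam (fun x => - u x).
Proof.
move=> [lsc_u [super_in super_bd]]; split; first exact: lsc_on_opp.
split=> [x0 phi g H Ox0 C2 touch above | x0 nu phi g H U normal openU clU C2 touch above].
- have below x : O x -> x <> x0 -> u x > - phi x.
    by move=> Ox xx0; have := above x Ox xx0; lra.
  have := super_in x0 _ _ _ Ox0 (C2_on_opp C2) ltac:(rewrite /= touch; ring) below.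
  by rewrite Eop_opp; lra.
- have below x : Rn_closure O x -> x <> x0 -> u x > - phi x.
    by move=> clx xx0; have := above x clx xx0; lra.
  have := super_bd x0 nu _ _ _ U normal openU clU (C2_on_opp C2)
    ltac:(rewrite /= touch; ring) below.
  by rewrite Eop_opp -(Ropp_involutive (dot (g x0) nu)) -dot_oppl -Ropp_Rmax; lra.
Qed.

(* Near p the bump adds at most d while u gains less than d, which cannot beat its value at q. *)
Lemma bump_maximizer_far n (C : vec n -> Prop) u (p q y : vec n) d r :
  0 < r -> 0 < d -> u p + 2 * d <= u q -> C q ->
  (forall x, C x -> Defs.dist x p < r -> u x < u p + d) -> C y ->
  (forall x, C x -> u x + d * gauss (/ (r * r)) p x <= u y + d * gauss (/ (r * r)) p y) ->
  1 < 2 * / (r * r) * sqdist p y.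
Proof.
move=> r_gt0 d_gt0 pq Cq osc_p Cy y_max.
have k_gt0 : 0 < / (r * r) by apply: Rinv_0_lt_compat; nra.
have far : r <= Defs.dist y p.
  apply: Rnot_lt_le => near_p.
  have := y_max q Cq; have := osc_p y Cy near_p.
  have := gauss_le1 p y (Rlt_le _ _ k_gt0); have := gauss_gt0 (/ (r * r)) p q.
  by nra.
have : r * r <= sqdist p y by rewrite sqdistE; apply: Rmult_le_compat; lra.
have : / (r * r) * (r * r) = 1 by field; lra.
by nra.
Qed.

Lemma test_fun_touches n (C : vec n -> Prop) u (p y : vec n) k d :
  (forall x, C x -> u x + d * gauss k p x <= u y + d * gauss k p y) ->
  forall x, C x -> x <> y -> u x < test_fun k d (u y + d * gauss k p y) p y x.
Proof.
move=> y_max x Cx xy; rewrite /test_fun sqdistE.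
have d2_gt0 := Rmult_lt_0_compat _ _ (dist_gt0 xy) (dist_gt0 xy).
by have := Rmult_lt_0_compat _ _ d2_gt0 d2_gt0; have := y_max x Cx; lra.
Qed.

Lemma nonpos_subsolution_const n (O : vec n -> Prop) Lam u p q :
  Rn_open O -> Rn_bounded O -> Rn_convex O -> smooth_boundary O ->
  continuous_on (Rn_closure O) u -> visc_sub O Lam u -> (forall x, O x -> u x <= 0) ->
  O p -> O q -> u p = u q.
Proof.
move=> openO boundedO convO [rho [Drho dfO]] cont_u [_ [sub_in sub_bd]] u_nonpos.
suff no_lt : forall p q, O p -> O q -> ~ u p < u q.
  move=> Op Oq; case: (Rtotal_order (u p) (u q)) => [| [// |]].
  - by move/(no_lt _ _ Op Oq).
  - by move/(no_lt _ _ Oq Op).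
move=> {}p {}q Op Oq pq.
have u_nonpos_cl := continuous_on_closure_le cont_u u_nonpos.
set d := (u q - u p) / 2; have d_gt0 : 0 < d by rewrite /d; lra.
have [r1 [r1_gt0 ball_p]] := openO p Op.
have [r2 [r2_gt0 osc_p]] := cont_u p (Rn_closure_sub Op) d d_gt0.
set r := Rmin r1 r2; have r_gt0 : 0 < r by apply: Rmin_pos.
set k := / (r * r); have k_gt0 : 0 < k by apply: Rinv_0_lt_compat; nra.
have [y [cly y_max]] := continuous_on_attains_max (f := fun x => u x + d * gauss k p x)
  (Rn_closure_bounded boundedO) (@Rn_closure_closed n O) (ex_intro _ q (Rn_closure_sub Oq))
  (continuous_on_plus cont_u (fun x => continuous_at_mult (continuous_at_const d x)
                                                         (continuous_at_gauss k p x))).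
have k_far : 1 < 2 * k * sqdist p y.
  apply: (bump_maximizer_far r_gt0 d_gt0 _ (Rn_closure_sub Oq) _ cly y_max).
    by rewrite /d; lra.
  move=> x clx dxp; have /Rabs_def2 [? _] := osc_p x clx (Rlt_le_trans _ _ _ dxp (Rmin_r _ _)).
  lra.
set phi := test_fun k d (u y + d * gauss k p y) p y.
have phi_y : phi y = u y by rewrite /phi test_fun_center; ring.
have above := test_fun_touches y_max.
have E_pos : 0 < Eop Lam (u y) (phi y) (test_grad k d p y y) (test_hess k d p y y).
  have := Eop_nonpos_ge Lam (phi y) (test_grad k d p y y) (test_hess k d p y y) (u_nonpos_cl y cly).
  by have := quad_test_hess_center_lt0 d_gt0 k_gt0 k_far; lra.
case: (classic (O y)) => [Oy | Ony].
  have := sub_in y phi _ _ Oy (test_fun_C2 k d _ p y) phi_y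
    (fun x Ox => above x (Rn_closure_sub Ox)).
  lra.
set nu := vscale (/ vnorm (Drho y)) (Drho y).
have normal : outer_normal O y nu by split; [split | exists rho, Drho].
have := sub_bd y nu phi _ _ _ normal (@Rn_open_True n) (fun _ _ => I) (test_fun_C2 k d _ p y)
  phi_y above.
have slope : 0 < dot (test_grad k d p y y) nu.
  apply: (test_grad_outer_normal_pos convO dfO cly Ony r_gt0 _ d_gt0 k_gt0) => z dzp.
  exact: ball_p (Rlt_le_trans _ _ _ dzp (Rmin_l _ _)).
by have := Rmin_glb_lt _ _ 0 E_pos slope; lra.
Qed.

Theorem lemma4 (n : nat) (Omega : vec n -> Prop) (Lam : R) (u : vec n -> R) :
  Rn_open Omega -> Rn_bounded Omega -> Rn_convex Omega -> smooth_boundary Omega ->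
  0 < Lam ->
  visc_solution Omega Lam u ->
  (exists x y, Omega x /\ Omega y /\ u x <> u y) ->
  (exists x, Omega x /\ u x > 0) /\ (exists x, Omega x /\ u x < 0).
Proof.
move=> openO boundedO convO smoothO _ [cont_u [sub_u super_u]] [x1 [x2 [O1 [O2 u12]]]].
split; apply: NNPP => no_sign; apply: u12.
- apply: (nonpos_subsolution_const openO boundedO convO smoothO cont_u sub_u _ O1 O2) => x Ox.
  by apply: Rnot_lt_le => ux; apply: no_sign; exists x.
- have opp_nonpos x : Omega x -> - u x <= 0.
    by move=> Ox; apply: Rnot_lt_le => ux; apply: no_sign; exists x; split=> //; lra.
  have := nonpos_subsolution_const openO boundedO convO smoothO (continuous_on_opp cont_u)
    (visc_super_opp super_u) opp_nonpos O1 O2.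
  lra.
Qed.
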